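(* In the static load balancing game described in the context, suppose all initial loads are zero, i.e., $s_j^0=0$ for all $j\in[m]$. Then $\mathrm{PoA}\le 3$.
   Context: Static load balancing game: there are $m$ servers $[m]$ with service rates $\mu_j>0$ and initial loads $s_j^0\ge0$, and $n$ players $[n]$; player $i$ holds a job of length $\lambda_i>0$. Player $i$'s action set is $A_i=\{a_i=(a_{i1},\dots,a_{im}):\sum_j a_{ij}=1,\ a_{ij}\ge0\}$. The cost of player $i$ is $$D_i(a)=\sum_{j=1}^m \lambda_i a_{ij}\left(\frac{\lambda_i a_{ij}}{2\mu_j}+\frac{s_j^0+\sum_{k\neq i}\lambda_k a_{kj}}{\mu_j}\right).$$ A pure Nash equilibrium (NE) is a profile $a$ with $D_i(a_i,a_{-i})\le D_i(a_i',a_{-i})$ for all $i$, $a_i'\in A_i$. The price of anarchy is $\mathrm{PoA}=\dfrac{\max_{a\in\mathrm{NE}}\sum_iD_i(a)}{\min_a\sum_iD_i(a)}$. *)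

From mathcomp Require Import all_boot all_order all_algebra.
Set Implicit Arguments. Unset Strict Implicit. Unset Printing Implicit Defensive.
Import Order.TTheory GRing.Theory Num.Theory.
Local Open Scope ring_scope.

Section LB.
Variables (R : realFieldType) (m n : nat).

(* A strategy profile: a i j = fraction of player i's job sent to server j. *)
Definition profile := 'I_n -> 'I_m -> R.

Definition in_action (ai : 'I_m -> R) : Prop :=
  (forall j, 0 <= ai j) /\ \sum_(j < m) ai j = 1.

Definition feasible (a : profile) : Prop := forall i, in_action (a i).

Definition cost (mu s0 : 'I_m -> R) (lam : 'I_n -> R) (a : profile) (i : 'I_n) : R :=
  \sum_(j < m) lam i * a i j *
     (lam i * a i j / (2 * mu j)
      + (s0 j + \sum_(k < n | k != i) lam k * a k j) / mu j).

Definition deviate (a : profile) (i : 'I_n) (ai : 'I_m -> R) : profile :=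
  fun k => if k == i then ai else a k.

Definition is_NE (mu s0 : 'I_m -> R) (lam : 'I_n -> R) (a : profile) : Prop :=
  feasible a /\
  forall i (ai : 'I_m -> R), in_action ai ->
    cost mu s0 lam a i <= cost mu s0 lam (deviate a i ai) i.

Definition social_cost (mu s0 : 'I_m -> R) (lam : 'I_n -> R) (a : profile) : R :=
  \sum_(i < n) cost mu s0 lam a i.

End LB.

From mathcomp Require Import all_boot all_order all_algebra.
From mathcomp Require Import ring lra.
Import Order.TTheory GRing.Theory Num.Theory.
Local Open Scope ring_scope.
Set Implicit Arguments. Unset Strict Implicit.

(* With zero initial loads, a player whose flow is x on server j, where the
   total load is L, pays x (L - x/2) / mu_j there. Summing over the players,
   the social cost of a feasible profile with loads L lies between
   Sum_j L_j^2 / (2 mu_j) and Sum_j L_j^2 / mu_j. At a Nash equilibrium a with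
   loads L, no player gains by moving an infinitesimal part of its job towards
   its part of another profile b with loads M; to first order this gives the
   variational inequality Sum_j L_j^2 / mu_j <= Sum_j M_j L_j / mu_j, whence
   Sum_j L_j^2 / mu_j <= Sum_j M_j^2 / mu_j since 2 M L <= L^2 + M^2. Chaining the
   bounds, the equilibrium costs at most twice the cost of b, a fortiori at
   most three times. *)

Lemma ge0_of_perturbation (R : realFieldType) (A B : R) :
  (forall e, 0 < e -> e <= 1 -> 0 <= e * A + e ^+ 2 * B) -> 0 <= A.
Proof.
move=> hAB; rewrite leNgt; apply/negP => A_lt0.
have B_le : B <= `|B| := ler_norm B.
have den_gt0 : 0 < `|B| - A by have := normr_ge0 B; lra.
(* chosen so that A + e |B| = e A, whence e A + e^2 B <= e^2 A < 0 *)
set e := - A / (`|B| - A).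
have e_gt0 : 0 < e by rewrite divr_gt0 // oppr_gt0.
have e_le1 : e <= 1 by rewrite ler_pdivrMr // mul1r; have := normr_ge0 B; lra.
have e_den : e * (`|B| - A) = - A by rewrite /e divfK // gt_eqF.
have eB : e ^+ 2 * B <= e ^+ 2 * `|B| by rewrite ler_pM2l // exprn_gt0.
have eeA : e ^+ 2 * A < 0 by rewrite pmulr_rlt0 // exprn_gt0.
have eBA : e ^+ 2 * `|B| = e * (- A) + e ^+ 2 * A by rewrite -e_den; ring.
have := hAB e e_gt0 e_le1; lra.
Qed.

Lemma sum_sq_le_of_variational (R : realFieldType) (I : finType) (L M w : I -> R) :
  (forall j, 0 < w j) ->
  \sum_j L j * (L j / w j) <= \sum_j M j * (L j / w j) ->
  \sum_j L j ^+ 2 / w j <= \sum_j M j ^+ 2 / w j.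
Proof.
move=> w_gt0 hvar.
have cross : 2 * \sum_j M j * (L j / w j)
             <= \sum_j L j * (L j / w j) + \sum_j M j ^+ 2 / w j.
  rewrite mulr_sumr -big_split; apply: ler_sum => j _ /=.
  have wj := w_gt0 j.
  have -> : L j * (L j / w j) + M j ^+ 2 / w j
    = 2 * (M j * (L j / w j)) + (M j - L j) ^+ 2 / w j by field; lra.
  by rewrite lerDl divr_ge0 ?sqr_ge0 ?ltW.
have -> : \sum_j L j ^+ 2 / w j = \sum_j L j * (L j / w j).
  by apply: eq_bigr => j _; rewrite mulrA -expr2.
lra.
Qed.

Lemma in_action_segment (R : realFieldType) (m : nat) (c d : 'I_m -> R) (e : R) :
  in_action c -> in_action d -> 0 <= e -> e <= 1 ->
  in_action (fun j => c j + e * (d j - c j)).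
Proof.
move=> [c_ge0 c_sum] [d_ge0 d_sum] e_ge0 e_le1; split.
  move=> j; have -> : c j + e * (d j - c j) = (1 - e) * c j + e * d j by ring.
  by rewrite addr_ge0 // mulr_ge0 // subr_ge0.
by rewrite big_split /= -mulr_sumr sumrB c_sum d_sum subrr mulr0 addr0.
Qed.

Section ZeroInitialLoad.
Variables (R : realFieldType) (m n : nat).
Variables (mu s0 : 'I_m -> R) (lam : 'I_n -> R).
Hypothesis mu_gt0 : forall j, 0 < mu j.
Hypothesis s0_eq0 : forall j, s0 j = 0.

Definition load (a : profile R m n) j := \sum_(k < n) lam k * a k j.

Definition load_except (a : profile R m n) i j :=
  \sum_(k < n | k != i) lam k * a k j.

Lemma loadE a i j : load a j = lam i * a i j + load_except a i j.
Proof. by rewrite /load (bigD1 i). Qed.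

Lemma load_except_ge0 a i j :
  (forall k, 0 <= lam k) -> feasible a -> 0 <= load_except a i j.
Proof.
by move=> lam_ge0 fa; apply: sumr_ge0 => k _; rewrite mulr_ge0 //; case: (fa k).
Qed.

Lemma load_except_deviate a i c j : load_except (deviate a i c) i j = load_except a i j.
Proof. by apply: eq_bigr => k /negbTE; rewrite /deviate => ->. Qed.

Lemma deviate_self (a : profile R m n) i c : deviate a i c i = c.
Proof. by rewrite /deviate eqxx. Qed.

Lemma cost_load_except a i : cost mu s0 lam a i =
  \sum_(j < m) lam i * a i j * (lam i * a i j / (2 * mu j) + load_except a i j / mu j).
Proof. by apply: eq_bigr => j _; rewrite s0_eq0 add0r. Qed.

Lemma sum_load_mul a (f : 'I_m -> R) :
  \sum_(i < n) \sum_(j < m) lam i * a i j * f j = \sum_(j < m) load a j * f j.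
Proof. by rewrite exchange_big; apply: eq_bigr => j _; rewrite mulr_suml. Qed.

Lemma NE_variational a i c : is_NE mu s0 lam a -> in_action c ->
  \sum_(j < m) lam i * a i j * (load a j / mu j)
  <= \sum_(j < m) lam i * c j * (load a j / mu j).
Proof.
move=> [fa NE] hc; rewrite -subr_ge0 -sumrB.
pose B := \sum_(j < m) (lam i * (c j - a i j)) ^+ 2 / (2 * mu j).
apply: (@ge0_of_perturbation _ _ B) => e e_gt0 e_le1.
have := NE i _ (in_action_segment (fa i) hc (ltW e_gt0) e_le1).
rewrite -subr_ge0 !cost_load_except deviate_self -sumrB.
have expand j :
  let y := lam i * (a i j + e * (c j - a i j)) in let x := lam i * a i j in
  y * (y / (2 * mu j) + load_except a i j / mu j)
    - x * (x / (2 * mu j) + load_except a i j / mu j)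
  = e * (lam i * c j * (load a j / mu j) - lam i * a i j * (load a j / mu j))
    + e ^+ 2 * ((lam i * (c j - a i j)) ^+ 2 / (2 * mu j)).
  by have := mu_gt0 j; rewrite /= (loadE a i j) => ?; field; lra.
under eq_bigr do rewrite load_except_deviate expand.
by rewrite big_split /= -!mulr_sumr.
Qed.

Lemma sum_load_sqE a :
  \sum_(j < m) load a j ^+ 2 / mu j
  = \sum_(i < n) \sum_(j < m) lam i * a i j * (load a j / mu j).
Proof. by rewrite sum_load_mul; apply: eq_bigr => j _; rewrite mulrA -expr2. Qed.

Lemma social_cost_le_sum_load a :
  social_cost mu s0 lam a <= \sum_(j < m) load a j ^+ 2 / mu j.
Proof.
rewrite sum_load_sqE; apply: ler_sum => i _; rewrite cost_load_except.
apply: ler_sum => j _; have := mu_gt0 j; rewrite (loadE a i j) => mu_j_gt0.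
rewrite -subr_ge0 (_ : _ - _ = (lam i * a i j) ^+ 2 / (2 * mu j)).
  by rewrite divr_ge0 ?sqr_ge0 // mulr_ge0 // ltW.
by field; lra.
Qed.

Lemma sum_load_le_social_cost b : (forall k, 0 <= lam k) -> feasible b ->
  \sum_(j < m) load b j ^+ 2 / mu j <= 2 * social_cost mu s0 lam b.
Proof.
move=> lam_ge0 fb; rewrite sum_load_sqE /social_cost mulr_sumr.
apply: ler_sum => i _; rewrite cost_load_except mulr_sumr.
apply: ler_sum => j _; have := mu_gt0 j; rewrite (loadE b i j) => mu_j_gt0.
have x_ge0 : 0 <= lam i * b i j by rewrite mulr_ge0 //; case: (fb i).
have O_ge0 := load_except_ge0 i j lam_ge0 fb.
rewrite -subr_ge0 (_ : _ - _ = lam i * b i j * load_except b i j / mu j).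
  by apply: divr_ge0; [exact: mulr_ge0 | exact: ltW].
by field; lra.
Qed.

Lemma social_cost_ge0 b : (forall k, 0 <= lam k) -> feasible b ->
  0 <= social_cost mu s0 lam b.
Proof.
move=> lam_ge0 fb; have := sum_load_le_social_cost lam_ge0 fb.
have : 0 <= \sum_(j < m) load b j ^+ 2 / mu j.
  by apply: sumr_ge0 => j _; rewrite divr_ge0 ?sqr_ge0 // ltW.
lra.
Qed.

Lemma NE_social_cost_le2 a b : (forall k, 0 <= lam k) ->
  is_NE mu s0 lam a -> feasible b ->
  social_cost mu s0 lam a <= 2 * social_cost mu s0 lam b.
Proof.
move=> lam_ge0 NE fb.
have var : \sum_(j < m) load a j * (load a j / mu j)
           <= \sum_(j < m) load b j * (load a j / mu j).
  rewrite -(sum_load_mul a) -(sum_load_mul b); apply: ler_sum => i _.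
  exact: NE_variational NE (fb i).
apply: le_trans (social_cost_le_sum_load a) _.
apply: le_trans (sum_load_le_social_cost lam_ge0 fb).
exact: sum_sq_le_of_variational.
Qed.

End ZeroInitialLoad.

Theorem corollary1 (R : realFieldType) (m n : nat)
    (mu s0 : 'I_m -> R) (lam : 'I_n -> R)
    (hmu : forall j, 0 < mu j) (hlam : forall i, 0 < lam i)
    (hs0 : forall j, s0 j = 0)
    (a b : 'I_n -> 'I_m -> R) :
  is_NE mu s0 lam a -> feasible b ->
  social_cost mu s0 lam a <= 3 * social_cost mu s0 lam b.
Proof.
move=> NE fb; have lam_ge0 k : 0 <= lam k by exact: ltW.
have := NE_social_cost_le2 hmu hs0 lam_ge0 NE fb.
have := social_cost_ge0 hmu hs0 lam_ge0 fb.
lra.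
Qed.
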